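(* Let $m,v,x,y$ be nonzero real numbers, let $w\geq 0$ and let $u\in\mathbb{R}$. Let $\mathfrak{n}$ be the five-dimensional real Lie algebra with basis $\{E_1,\dots,E_5\}$ whose only non-vanishing brackets (up to antisymmetry) are $$[E_1,E_2]=mE_3+uE_5,\qquad [E_1,E_3]=vE_4+wE_5,\qquad [E_1,E_4]=xE_5,\qquad [E_2,E_3]=yE_5.$$ Equip the corresponding simply connected nilpotent Lie group with the left-invariant Riemannian metric for which $\{E_1,\dots,E_5\}$ is orthonormal. Then this metric is an algebraic Ricci soliton if and only if $$u=w=0,\qquad m^2=v^2=\tfrac32x^2,\qquad y^2=x^2.$$ In that case $$c=-\tfrac{11}4x^2,\qquad D=\mathrm{diag}\big(\tfrac34x^2,\tfrac32x^2,\tfrac94x^2,3x^2,\tfrac{15}4x^2\big),$$ where $D$ is written as a matrix with respect to the basis $\{E_1,\dots,E_5\}$.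
   Context: Let $G$ be a Lie group with Lie algebra $\mathfrak{g}$ and let $g$ be a left-invariant Riemannian metric on $G$. Let $\mathrm{Ric}$ denote the $(1,1)$ Ricci tensor of $g$, viewed as a linear endomorphism of $\mathfrak{g}$. The metric $g$ is an algebraic Ricci soliton if there are a real number $c$ and a derivation $D$ of $\mathfrak{g}$ such that $\mathrm{Ric}=c\,\mathrm{Id}+D$. The notation $\mathrm{diag}(a_1,\dots,a_5)$ denotes the diagonal matrix with these entries. *)

From HB Require Import structures.
From mathcomp Require Import all_boot all_order all_algebra.
Set Implicit Arguments. Unset Strict Implicit. Unset Printing Implicit Defensive.
Import Order.TTheory GRing.Theory Num.Theory.
Local Open Scope ring_scope.

Section LieMetric.
Variables (R : realFieldType) (n : nat).

(* Vectors of the Lie algebra are coordinate columns w.r.t. a fixed basis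
   E_0, ..., E_(n-1); the left-invariant metric makes this basis orthonormal,
   i.e. the metric is the standard dot product in these coordinates. *)
Definition basisv (k : 'I_n) : 'cV[R]_n := delta_mx k 0.

Definition dotv (X Y : 'cV[R]_n) : R := (X^T *m Y) 0 0.

Definition lie_bracket (br : 'I_n -> 'I_n -> 'cV[R]_n) (X Y : 'cV[R]_n) : 'cV[R]_n :=
  \sum_(i < n) \sum_(j < n) (X i 0 * Y j 0) *: br i j.

(* Levi-Civita connection of the left-invariant metric, via the Koszul formula:
   <nabla_X Y, Z> = 1/2 (<[X,Y],Z> - <[Y,Z],X> + <[Z,X],Y>). *)
Definition levi_civita br (X Y : 'cV[R]_n) : 'cV[R]_n :=
  \col_(k < n) (2^-1 * (dotv (lie_bracket br X Y) (basisv k)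
                         - dotv (lie_bracket br Y (basisv k)) X
                         + dotv (lie_bracket br (basisv k) X) Y)).

Definition curvature br (X Y Z : 'cV[R]_n) : 'cV[R]_n :=
  levi_civita br X (levi_civita br Y Z) - levi_civita br Y (levi_civita br X Z)
  - levi_civita br (lie_bracket br X Y) Z.

Definition ricci_form br (Y Z : 'cV[R]_n) : R :=
  \sum_(k < n) dotv (curvature br (basisv k) Y Z) (basisv k).

(* (1,1) Ricci tensor as a matrix w.r.t. the orthonormal basis:
   Ric E_j = sum_i ric(E_i, E_j) E_i  (column convention: entry (i,j)). *)
Definition ricci_op br : 'M[R]_n :=
  \matrix_(i < n, j < n) ricci_form br (basisv i) (basisv j).

Definition is_derivation br (D : 'M[R]_n) : Prop :=
  forall X Y : 'cV[R]_n,
    D *m lie_bracket br X Y = lie_bracket br (D *m X) Y + lie_bracket br X (D *m Y).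

Definition is_alg_ricci_soliton br : Prop :=
  exists (c : R) (D : 'M[R]_n), is_derivation br D /\ ricci_op br = c%:M + D.

End LieMetric.

(* The five-dimensional nilpotent Lie algebra of the statement; the paper's
   E_1,...,E_5 are basisv 0, ..., basisv 4. *)
Definition br5 (R : realFieldType) (m u v w x y : R) (i j : 'I_5) : 'cV[R]_5 :=
  let E (k : nat) : 'cV[R]_5 := @basisv R 5 (inord k) in
  match nat_of_ord i, nat_of_ord j with
  | 0, 1 => m *: E 2 + u *: E 4
  | 1, 0 => - (m *: E 2 + u *: E 4)
  | 0, 2 => v *: E 3 + w *: E 4
  | 2, 0 => - (v *: E 3 + w *: E 4)
  | 0, 3 => x *: E 4
  | 3, 0 => - (x *: E 4)
  | 1, 2 => y *: E 4
  | 2, 1 => - (y *: E 4)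
  | _, _ => 0
  end.

From HB Require Import structures.
From mathcomp Require Import all_boot all_order all_algebra ring lra.
Set Implicit Arguments. Unset Strict Implicit. Unset Printing Implicit Defensive.
Import Order.TTheory GRing.Theory Num.Theory.
Local Open Scope ring_scope.

(* On an orthonormal basis, Koszul's formula expresses the Levi-Civita
   connection, and hence the Ricci operator, through the structure constants,
   so for this algebra Ric can be computed entrywise.  If Ric = c Id + D, then
   D = Ric - c Id: the soliton condition says that Ric - c Id is a derivation
   for some c.  The derivation identity on the pair (E_1, E_4) gives m u x = 0
   and v w x = 0, hence u = w = 0; on the pairs (E_1, E_2), (E_1, E_3),
   (E_1, E_4), (E_2, E_3) it then gives four equations, linear in m^2, v^2,
   x^2, y^2 and c, whose only solution is the stated one.  Conversely, for
   those values Ric - c Id is the diagonal matrix D, and diag(d_1, ..., d_5) is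
   a derivation as soon as d_k = d_i + d_j whenever E_k occurs in [E_i, E_j],
   which holds for the weights (3/4, 3/2, 9/4, 3, 15/4) x^2. *)

Section StructureConstants.
Variables (R : realFieldType) (n : nat) (br : 'I_n -> 'I_n -> 'cV[R]_n).
Local Notation E := (@basisv R n).

Definition struct_const i j k : R := br i j k 0.

Definition christoffel a b k : R :=
  2^-1 * (struct_const a b k - struct_const b k a + struct_const k a b).

Lemma dotvE (X Y : 'cV[R]_n) : dotv X Y = \sum_k X k 0 * Y k 0.
Proof. by rewrite /dotv mxE; apply: eq_bigr => k _; rewrite mxE. Qed.

Lemma basisvE k i : E k i 0 = (i == k)%:R.
Proof. by rewrite /basisv mxE eqxx andbT. Qed.

Lemma sum_basisv_mul k (F : 'I_n -> R) : \sum_p E k p 0 * F p = F k.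
Proof.
rewrite (bigD1 k) //= basisvE eqxx mul1r big1 ?addr0 // => p /negPf neq_pk.
by rewrite basisvE neq_pk mul0r.
Qed.

Lemma sum_mul_basisv k (F : 'I_n -> R) : \sum_p F p * E k p 0 = F k.
Proof. by rewrite -(sum_basisv_mul k F); apply: eq_bigr => p _; rewrite mulrC. Qed.

Lemma lie_bracketE X Y k :
  lie_bracket br X Y k 0 = \sum_i \sum_j X i 0 * Y j 0 * struct_const i j k.
Proof.
rewrite /lie_bracket summxE; apply: eq_bigr => i _.
by rewrite summxE; apply: eq_bigr => j _; rewrite mxE.
Qed.

Lemma lie_bracket_basisvl a Y k :
  lie_bracket br (E a) Y k 0 = \sum_j Y j 0 * struct_const a j k.
Proof.
rewrite lie_bracketE -(sum_basisv_mul a (fun i => \sum_j Y j 0 * struct_const i j k)).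
by apply: eq_bigr => i _; rewrite big_distrr; apply: eq_bigr => j _; rewrite -mulrA.
Qed.

Lemma lie_bracket_basisvr X b k :
  lie_bracket br X (E b) k 0 = \sum_i X i 0 * struct_const i b k.
Proof.
rewrite lie_bracketE; apply: eq_bigr => i _.
rewrite -(sum_basisv_mul b (fun j => X i 0 * struct_const i j k)).
by apply: eq_bigr => j _; rewrite mulrCA mulrA.
Qed.

Lemma lie_bracket_basisv a b : lie_bracket br (E a) (E b) = br a b.
Proof. by apply/matrixP => k j; rewrite ord1 lie_bracket_basisvl sum_basisv_mul. Qed.

Lemma levi_civitaE X Y k :
  levi_civita br X Y k 0 = \sum_a \sum_b X a 0 * Y b 0 * christoffel a b k.
Proof.
rewrite /levi_civita mxE !dotvE sum_mul_basisv lie_bracketE.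
have -> : \sum_l lie_bracket br Y (E k) l 0 * X l 0
          = \sum_a \sum_b X a 0 * Y b 0 * struct_const b k a.
  apply: eq_bigr => a _; rewrite lie_bracket_basisvr mulrC big_distrr.
  by apply: eq_bigr => b _ /=; ring.
have -> : \sum_l lie_bracket br (E k) X l 0 * Y l 0
          = \sum_a \sum_b X a 0 * Y b 0 * struct_const k a b.
  rewrite exchange_big; apply: eq_bigr => b _.
  rewrite lie_bracket_basisvl mulrC big_distrr.
  by apply: eq_bigr => a _ /=; ring.
rewrite -sumrN -!big_split big_distrr /=; apply: eq_bigr => a _.
rewrite -sumrN -!big_split big_distrr /=; apply: eq_bigr => b _.
rewrite /christoffel; ring.
Qed.

Lemma levi_civita_basisvl a Z k :
  levi_civita br (E a) Z k 0 = \sum_q Z q 0 * christoffel a q k.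
Proof.
rewrite levi_civitaE -(sum_basisv_mul a (fun i => \sum_q Z q 0 * christoffel i q k)).
by apply: eq_bigr => i _; rewrite big_distrr; apply: eq_bigr => j _; rewrite -mulrA.
Qed.

Lemma levi_civita_basisvr Z b k :
  levi_civita br Z (E b) k 0 = \sum_p Z p 0 * christoffel p b k.
Proof.
rewrite levi_civitaE; apply: eq_bigr => p _.
rewrite -(sum_basisv_mul b (fun q => Z p 0 * christoffel p q k)).
by apply: eq_bigr => q _ /=; ring.
Qed.

Lemma levi_civita_basisv a b k : levi_civita br (E a) (E b) k 0 = christoffel a b k.
Proof. by rewrite levi_civita_basisvl sum_basisv_mul. Qed.

Lemma curvatureE X Y Z k :
  curvature br X Y Z k 0 = levi_civita br X (levi_civita br Y Z) k 0
    - levi_civita br Y (levi_civita br X Z) k 0 - levi_civita br (lie_bracket br X Y) Z k 0.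
Proof.
have subE (A B : 'cV[R]_n) : (A - B) k 0 = A k 0 - B k 0 by rewrite !mxE.
by rewrite /curvature !subE.
Qed.

Lemma curvature_basisvE a b c k :
  curvature br (E a) (E b) (E c) k 0
  = \sum_q christoffel b c q * christoffel a q k
    - \sum_q christoffel a c q * christoffel b q k
    - \sum_q struct_const a b q * christoffel q c k.
Proof.
rewrite curvatureE lie_bracket_basisv (levi_civita_basisvl a) (levi_civita_basisvl b).
rewrite (levi_civita_basisvr (br a b)).
by congr (_ - _ - _); apply: eq_bigr => q _; rewrite levi_civita_basisv.
Qed.

Lemma ricci_opE a b :
  ricci_op br a b = \sum_k (\sum_q christoffel a b q * christoffel k q k
    - \sum_q christoffel k b q * christoffel a q k
    - \sum_q struct_const k a q * christoffel q b k).
Proof.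
rewrite /ricci_op mxE /ricci_form; apply: eq_bigr => k _.
by rewrite dotvE sum_mul_basisv curvature_basisvE.
Qed.

Lemma derivation_basisvE D : is_derivation br D -> forall a b k,
  \sum_l D k l * struct_const a b l
  = \sum_i D i a * struct_const i b k + \sum_j D j b * struct_const a j k.
Proof.
move=> derD a b k; have := congr1 (fun M : 'cV_n => M k 0) (derD (E a) (E b)).
rewrite /= mxE lie_bracket_basisv => ->.
rewrite mxE lie_bracket_basisvr lie_bracket_basisvl.
by congr (_ + _); apply: eq_bigr => i _; rewrite mxE sum_mul_basisv.
Qed.

Lemma diag_mx_derivation (d : 'rV[R]_n) :
  (forall i j k, d 0 k * struct_const i j k = (d 0 i + d 0 j) * struct_const i j k) ->
  is_derivation br (diag_mx d).
Proof.
move=> homog X Y; apply/matrixP => k z; rewrite ord1 !mul_diag_mx !mxE !lie_bracketE.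
rewrite big_distrr -big_split; apply: eq_bigr => i _ /=.
rewrite big_distrr -big_split; apply: eq_bigr => j _ /=.
rewrite !mxE mulrCA -[in LHS]mulrA homog; ring.
Qed.

End StructureConstants.

Section Br5.
Variables (R : realFieldType) (m u v w x y : R).
Local Notation br := (br5 m u v w x y).

Definition br5_const (i j k : nat) : R :=
  let e (a : nat) : R := (k == a)%:R in
  match i, j with
  | 0, 1 => m * e 2 + u * e 4
  | 1, 0 => - (m * e 2 + u * e 4)
  | 0, 2 => v * e 3 + w * e 4
  | 2, 0 => - (v * e 3 + w * e 4)
  | 0, 3 => x * e 4
  | 3, 0 => - (x * e 4)
  | 1, 2 => y * e 4
  | 2, 1 => - (y * e 4)
  | _, _ => 0
  end.

Lemma struct_const_br5 i j k : struct_const br i j k = br5_const i j k.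
Proof.
have inord_eq (a : nat) (l : 'I_5) : (a < 5)%N -> (l == inord a) = (val l == a).
  by move=> lt_a5; rewrite -val_eqE /= inordK.
rewrite /struct_const /br5 /br5_const.
case: i => [[|[|[|[|[|i]]]]] lt_i5] //.
all: case: j => [[|[|[|[|[|j]]]]] lt_j5] //.
all: by rewrite /= ?mxE ?eqxx ?andbT ?inord_eq.
Qed.

Definition christoffel5 (a b k : nat) : R :=
  2^-1 * (br5_const a b k - br5_const b k a + br5_const k a b).

Definition sum5 (F : nat -> R) : R := F 0%N + F 1%N + F 2%N + F 3%N + F 4%N.

Lemma sum5E (F : nat -> R) : \sum_(i < 5) F i = sum5 F.
Proof. by rewrite !big_ord_recr big_ord0 /= add0r. Qed.

Lemma ricci_op_br5_sum (a b : 'I_5) : ricci_op br a b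
  = sum5 (fun k => sum5 (fun q => christoffel5 a b q * christoffel5 k q k)
      - sum5 (fun q => christoffel5 k b q * christoffel5 a q k)
      - sum5 (fun q => br5_const k a q * christoffel5 q b k)).
Proof.
rewrite ricci_opE -sum5E; apply: eq_bigr => k _.
rewrite -!sum5E; congr (_ - _ - _); apply: eq_bigr => q _.
all: by rewrite /christoffel /christoffel5 !struct_const_br5.
Qed.

Definition ricci5 (i j : nat) : R :=
  match i, j with
  | 0, 0 => - (m^+2 + u^+2 + v^+2 + w^+2 + x^+2) / 2
  | 0, 1 | 1, 0 => - (w * y) / 2
  | 0, 2 | 2, 0 => u * y / 2
  | 1, 1 => - (m^+2 + u^+2 + y^+2) / 2
  | 1, 2 | 2, 1 => - (u * w) / 2
  | 1, 3 | 3, 1 => - (u * x) / 2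
  | 2, 2 => (m^+2 - v^+2 - w^+2 - y^+2) / 2
  | 2, 3 | 3, 2 => - (w * x) / 2
  | 2, 4 | 4, 2 => m * u / 2
  | 3, 3 => (v^+2 - x^+2) / 2
  | 3, 4 | 4, 3 => v * w / 2
  | 4, 4 => (u^+2 + w^+2 + x^+2 + y^+2) / 2
  | _, _ => 0
  end.

Lemma ricci_op_br5 (a b : 'I_5) : ricci_op br a b = ricci5 a b.
Proof.
rewrite ricci_op_br5_sum.
case: a => [[|[|[|[|[|a]]]]] lt_a5] //; case: b => [[|[|[|[|[|b]]]]] lt_b5] //.
all: by rewrite /sum5 /christoffel5 /br5_const /ricci5 /=; field.
Qed.

Definition ricci5_shift (c : R) (i j : nat) : R := ricci5 i j - c * (i == j)%:R.

Section Soliton.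
Variables (c : R) (D : 'M[R]_5).
Hypotheses (derD : is_derivation br D) (ricD : ricci_op br = c%:M + D).

Lemma soliton_derivationE (i j : 'I_5) : D i j = ricci5_shift c i j.
Proof.
have := congr1 (fun M : 'M_5 => M i j) ricD.
rewrite /= ricci_op_br5 !mxE /ricci5_shift => ->.
by rewrite val_eqE mulr_natr addrAC subrr add0r.
Qed.

Lemma ricci5_shift_derivation (a b k : 'I_5) :
  sum5 (fun l => ricci5_shift c k l * br5_const a b l)
  - (sum5 (fun i => ricci5_shift c i a * br5_const i b k)
     + sum5 (fun j => ricci5_shift c j b * br5_const a j k)) = 0.
Proof.
apply/eqP; rewrite subr_eq0 -!sum5E; apply/eqP.
have := derivation_basisvE derD a b k.
rewrite (eq_bigr (fun l : 'I_5 => ricci5_shift c k l * br5_const a b l)) => [->|l _].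
  by congr (_ + _); apply: eq_bigr => l _; rewrite soliton_derivationE struct_const_br5.
by rewrite soliton_derivationE struct_const_br5.
Qed.

Let o0 := @Ordinal 5 0 isT.
Let o1 := @Ordinal 5 1 isT.
Let o2 := @Ordinal 5 2 isT.
Let o3 := @Ordinal 5 3 isT.
Let o4 := @Ordinal 5 4 isT.

Lemma soliton_u_w_eq0 : m != 0 -> v != 0 -> x != 0 -> u = 0 /\ w = 0.
Proof.
move=> m0 v0 x0.
have mux : m * u * x = 0.
  apply: etrans (ricci5_shift_derivation o0 o3 o2).
  by rewrite /sum5 /ricci5_shift /ricci5 /br5_const /=; field.
have vwx : v * w * x = 0.
  apply: etrans (ricci5_shift_derivation o0 o3 o3).
  by rewrite /sum5 /ricci5_shift /ricci5 /br5_const /=; field.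
move/eqP: mux; move/eqP: vwx; rewrite !mulf_eq0 (negPf m0) (negPf v0) (negPf x0) /=.
by rewrite !orbF => /eqP-> /eqP->.
Qed.

Lemma soliton_params : u = 0 -> w = 0 -> m != 0 -> v != 0 -> x != 0 -> y != 0 ->
  [/\ m ^+ 2 = v ^+ 2, v ^+ 2 = 3 / 2 * x ^+ 2, y ^+ 2 = x ^+ 2
     & c = - (11 / 4 * x ^+ 2)].
Proof.
move=> u0 w0 m0 v0 x0 y0.
have e12 : m * (3/2 * m^+2 + 1/2 * x^+2 + c) = 0.
  apply: etrans (ricci5_shift_derivation o0 o1 o2).
  by rewrite /sum5 /ricci5_shift /ricci5 /br5_const /= u0 w0; field.
have e13 : v * (3/2 * v^+2 + 1/2 * y^+2 + c) = 0.
  apply: etrans (ricci5_shift_derivation o0 o2 o3).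
  by rewrite /sum5 /ricci5_shift /ricci5 /br5_const /= u0 w0; field.
have e14 : x * (3/2 * x^+2 + 1/2 * y^+2 + 1/2 * m^+2 + c) = 0.
  apply: etrans (ricci5_shift_derivation o0 o3 o4).
  by rewrite /sum5 /ricci5_shift /ricci5 /br5_const /= u0 w0; field.
have e23 : y * (1/2 * x^+2 + 3/2 * y^+2 + 1/2 * v^+2 + c) = 0.
  apply: etrans (ricci5_shift_derivation o1 o2 o4).
  by rewrite /sum5 /ricci5_shift /ricci5 /br5_const /= u0 w0; field.
move/eqP: e12; rewrite mulf_eq0 (negPf m0) => /eqP e12.
move/eqP: e13; rewrite mulf_eq0 (negPf v0) => /eqP e13.
move/eqP: e14; rewrite mulf_eq0 (negPf x0) => /eqP e14.
move/eqP: e23; rewrite mulf_eq0 (negPf y0) => /eqP e23.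
by split; lra.
Qed.
End Soliton.

Definition soliton_derivation5 : 'M[R]_5 :=
  diag_mx (\row_(i < 5) ([:: 3 / 4; 3 / 2; 9 / 4; 3; 15 / 4]`_i * x ^+ 2)).

Lemma soliton_derivation5_derivation : u = 0 -> w = 0 ->
  is_derivation br soliton_derivation5.
Proof.
move=> u0 w0; apply: diag_mx_derivation => i j k; rewrite !struct_const_br5 !mxE.
case: i => [[|[|[|[|[|i]]]]] lt_i5] //; case: j => [[|[|[|[|[|j]]]]] lt_j5] //.
all: case: k => [[|[|[|[|[|k]]]]] lt_k5] //.
all: by rewrite /br5_const /= ?u0 ?w0; field.
Qed.

Lemma ricci_op_br5_soliton : u = 0 -> w = 0 -> m ^+ 2 = v ^+ 2 ->
  v ^+ 2 = 3 / 2 * x ^+ 2 -> y ^+ 2 = x ^+ 2 ->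
  ricci_op br = (- (11 / 4 * x ^+ 2))%:M + soliton_derivation5.
Proof.
move=> u0 w0 mv vx yx; apply/matrixP => i j.
rewrite ricci_op_br5 !mxE -!val_eqE.
case: i => [[|[|[|[|[|i]]]]] lt_i5] //; case: j => [[|[|[|[|[|j]]]]] lt_j5] //.
all: by rewrite /ricci5 /= ?u0 ?w0 ?mv ?vx ?yx; field.
Qed.
End Br5.

Theorem mainTheorem6 (R : realFieldType) (m u v w x y : R) :
  m != 0 -> v != 0 -> x != 0 -> y != 0 -> 0 <= w ->
  (is_alg_ricci_soliton (br5 m u v w x y) <->
     [/\ u = 0, w = 0, m ^+ 2 = v ^+ 2, v ^+ 2 = 3 / 2 * x ^+ 2 & y ^+ 2 = x ^+ 2])
  /\
  ([/\ u = 0, w = 0, m ^+ 2 = v ^+ 2, v ^+ 2 = 3 / 2 * x ^+ 2 & y ^+ 2 = x ^+ 2] ->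
   forall (c : R) (D : 'M[R]_5),
     is_derivation (br5 m u v w x y) D ->
     ricci_op (br5 m u v w x y) = c%:M + D ->
     c = - (11 / 4 * x ^+ 2) /\
     D = diag_mx (\row_(i < 5) ([:: 3 / 4; 3 / 2; 9 / 4; 3; 15 / 4]`_i * x ^+ 2))).
Proof.
move=> m0 v0 x0 y0 _; split.
  split=> [[c [D [derD ricD]]] | [u0 w0 mv vx yx]].
    have [u0 w0] := soliton_u_w_eq0 derD ricD m0 v0 x0.
    by have [] := soliton_params derD ricD u0 w0 m0 v0 x0 y0.
  exists (- (11 / 4 * x ^+ 2)), (soliton_derivation5 x); split.
    exact: soliton_derivation5_derivation.
  exact: ricci_op_br5_soliton.
move=> [u0 w0 mv vx yx] c D derD ricD.
have [_ _ _ c_eq] := soliton_params derD ricD u0 w0 m0 v0 x0 y0.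
split=> //; apply: (addrI c%:M); rewrite -ricD c_eq.
exact: ricci_op_br5_soliton.
Qed.
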